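(* Let $\gamma=\exp(z_\gamma Z)\in H_n$ for some $z_\gamma\in\mathbb R\setminus\{0\}$ and suppose $\sigma$ is a $\gamma$-periodic magnetic geodesic which is a one-parameter subgroup. Then $\sigma(t)=\exp(tz_0Z)$ for some $z_0\in\mathbb R\setminus\{0\}$. Moreover, for every $E>0$, the two curves $\sigma(t)=\exp(\pm tEZ)$ are $\gamma$-periodic magnetic geodesics of energy $E$, with periods $\omega=z_\gamma/(\pm E)$ respectively.
   Context: Let $\mathfrak h_n$ be the real Lie algebra with basis $X_1,\dots,X_n,Y_1,\dots,Y_n,Z$ whose only nonzero brackets among basis vectors are $[X_i,Y_i]=Z$, and $H_n$ the simply connected Lie group with Lie algebra $\mathfrak h_n$; $\exp(U)\exp(W)=\exp(U+W+\tfrac12[U,W])$. Fix $A_i>0$; $g$ is the left-invariant metric with orthonormal basis $\{X_i/\sqrt{A_i},Y_i/\sqrt{A_i},Z\}$. With $\{\alpha_i,\beta_i,\zeta\}$ the dual basis and $B\in\mathbb R$, $\Omega=d(B\zeta)$; magnetic geodesics solve $\nabla_{\sigma'}\sigma'=F\sigma'$, $g(Fu,v)=\Omega(u,v)$. The magnetic geodesics with $\sigma(0)=e$ are exactly $\sigma(t)=\exp(\sum x_iX_i+\sum y_iY_i+zZ)$ with, for parameters $(u_i,v_i,z_0)$: if $z_0\ne0$, $x_i=\frac{u_i}{z_0}\sin(\frac{z_0t}{A_i})-\frac{v_i}{z_0}(1-\cos(\frac{z_0t}{A_i}))$, $y_i=\frac{u_i}{z_0}(1-\cos(\frac{z_0t}{A_i}))+\frac{v_i}{z_0}\sin(\frac{z_0t}{A_i})$,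 $z=(z_0+B+\sum\frac{u_i^2+v_i^2}{2A_iz_0})t-\sum\frac{u_i^2+v_i^2}{2z_0^2}\sin(\frac{z_0t}{A_i})$; if $z_0=0$, $x_i=u_it/A_i$, $y_i=v_it/A_i$, $z=Bt$. The energy $E=|\sigma'|$ satisfies $E^2=\sum\frac{u_i^2+v_i^2}{A_i}+(z_0+B)^2$. For $\gamma\neq e$, $\sigma$ is $\gamma$-periodic with period $\omega\ne0$ if $\gamma\sigma(t)=\sigma(t+\omega)$ for all $t$. *)

From HB Require Import structures.
From mathcomp Require Import all_boot all_order all_algebra.
From mathcomp Require Import all_classical all_reals all_analysis.
Set Implicit Arguments. Unset Strict Implicit. Unset Printing Implicit Defensive.
Import Order.TTheory GRing.Theory Num.Theory.
Local Open Scope ring_scope.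

Section Heis.
Variables (R : realType) (n : nat).

(* A point of H_n in exponential coordinates:
   exp(sum x_i X_i + sum y_i Y_i + z Z) is represented by (x, y, z).
   The same triple also represents the Lie algebra element
   sum x_i X_i + sum y_i Y_i + z Z. *)
Record Hpt := mkH { hx : 'I_n -> R; hy : 'I_n -> R; hz : R }.

Definition He : Hpt := mkH (fun _ => 0) (fun _ => 0) 0.

(* exp(U) exp(W) = exp(U + W + 1/2 [U,W]),  [U,W] = (sum_i x_i y'_i - y_i x'_i) Z *)
Definition Hmul (p q : Hpt) : Hpt :=
  mkH (fun i => hx p i + hx q i) (fun i => hy p i + hy q i)
      (hz p + hz q + 2^-1 * \sum_(i < n) (hx p i * hy q i - hy p i * hx q i)).

Definition Hexp_scale (t : R) (W : Hpt) : Hpt :=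
  mkH (fun i => t * hx W i) (fun i => t * hy W i) (t * hz W).

Definition expZ (c : R) : Hpt := mkH (fun _ => 0) (fun _ => 0) c.

(* The magnetic geodesic through e with parameters (u, v, z0),
   as given explicitly in the paper. *)
Definition geod_e (A : 'I_n -> R) (B : R) (u v : 'I_n -> R) (z0 : R) (t : R) : Hpt :=
  if z0 == 0 then
    mkH (fun i => u i * t / A i) (fun i => v i * t / A i) (B * t)
  else
    mkH (fun i => u i / z0 * sin (z0 * t / A i) - v i / z0 * (1 - cos (z0 * t / A i)))
        (fun i => u i / z0 * (1 - cos (z0 * t / A i)) + v i / z0 * sin (z0 * t / A i))
        ((z0 + B + \sum_(i < n) (u i ^+ 2 + v i ^+ 2) / (2 * A i * z0)) * t
         - \sum_(i < n) (u i ^+ 2 + v i ^+ 2) / (2 * z0 ^+ 2) * sin (z0 * t / A i)).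

Definition geod_energy_sq (A : 'I_n -> R) (B : R) (u v : 'I_n -> R) (z0 : R) : R :=
  \sum_(i < n) (u i ^+ 2 + v i ^+ 2) / A i + (z0 + B) ^+ 2.

(* sigma : R -> H_n is a magnetic geodesic: by left-invariance of g and Omega,
   it is the left translate by sigma(0) of a magnetic geodesic through e. *)
Definition IsMagGeod (A : 'I_n -> R) (B : R) (sigma : R -> Hpt) : Prop :=
  exists (u v : 'I_n -> R) (z0 : R),
    forall t, sigma t = Hmul (sigma 0) (geod_e A B u v z0 t).

Definition IsMagGeodEnergy (A : 'I_n -> R) (B : R) (sigma : R -> Hpt) (E : R) : Prop :=
  0 <= E /\
  exists (u v : 'I_n -> R) (z0 : R),
    (forall t, sigma t = Hmul (sigma 0) (geod_e A B u v z0 t)) /\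
    E ^+ 2 = geod_energy_sq A B u v z0.

Definition gamma_periodic (gamma : Hpt) (sigma : R -> Hpt) (omega : R) : Prop :=
  gamma <> He /\ omega != 0 /\ forall t, Hmul gamma (sigma t) = sigma (t + omega).

Definition IsOneParamSubgroup (sigma : R -> Hpt) : Prop :=
  exists W : Hpt, forall t, sigma t = Hexp_scale t W.

End Heis.

(** Periodicity under [exp(z_γ Z)] evaluated at [t = 0] reads
    [exp(ω W) = exp(z_γ Z)]; since [ω ≠ 0], the horizontal part of [W] vanishes
    and [ω W_z = z_γ ≠ 0], so [σ] is the vertical line [exp(t W_z Z)].
    Conversely, every vertical line [exp(t c Z)] is the magnetic geodesic with
    parameters [u = v = 0], [z_0 = c - B], of energy [|c|], and left
    multiplication by [exp(z_γ Z)] shifts it by the period [z_γ / c]. *)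

From HB Require Import structures.
From mathcomp Require Import all_boot all_order all_algebra.
From mathcomp Require Import all_classical all_reals all_analysis.
Set Implicit Arguments. Unset Strict Implicit. Unset Printing Implicit Defensive.
Import Order.TTheory GRing.Theory Num.Theory.
Local Open Scope ring_scope.

Section VerticalLines.
Variables (R : realType) (n : nat).
Implicit Types (p W : Hpt R n) (a c t : R).

Lemma Hpt_ext p W : hx p =1 hx W -> hy p =1 hy W -> hz p = hz W -> p = W.
Proof.
case: p => x y z; case: W => x' y' z' /= ex ey ez.
by rewrite (funext ex) (funext ey) ez.
Qed.

Lemma Hmul1 p : Hmul p (He R n) = p.
Proof.
apply: Hpt_ext => [i|i|] /=; rewrite ?addr0 //.
by rewrite big1 ?mulr0 ?addr0 // => i _; rewrite !mulr0 subr0.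
Qed.

Lemma Hmul_expZl a p : Hmul (expZ n a) p = mkH (hx p) (hy p) (a + hz p).
Proof.
apply: Hpt_ext => [i|i|] /=; rewrite ?add0r //.
by rewrite big1 ?mulr0 ?addr0 // => i _; rewrite !mul0r subr0.
Qed.

Lemma Hexp_scale0 W : Hexp_scale 0 W = He R n.
Proof. by apply: Hpt_ext => [i|i|] /=; rewrite mul0r. Qed.

Lemma expZ_neq_He c : c != 0 -> expZ n c <> He R n.
Proof. by move=> /negP c_neq0 /(congr1 (@hz R n)) /= /eqP. Qed.

Lemma Hexp_scale_eq_expZ a c W :
  a != 0 -> Hexp_scale a W = expZ n c ->
  hz W = c / a /\ forall t, Hexp_scale t W = expZ n (t * hz W).
Proof.
move=> a_neq0 [eWx eWy eWz].
have horizontal_0 (f : 'I_n -> R) : (fun i => a * f i) = (fun=> 0) -> f =1 (fun=> 0).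
  move=> /(congr1 (fun g => g _)) /= af0 i.
  by move: (af0 i) => /eqP; rewrite mulf_eq0 (negbTE a_neq0) => /eqP.
split; first by rewrite -eWz mulrAC divff ?mul1r.
move=> t; apply: Hpt_ext => [i|i|] //=.
  by rewrite (horizontal_0 _ eWx) mulr0.
by rewrite (horizontal_0 _ eWy) mulr0.
Qed.

Lemma geod_e_vertical (A : 'I_n -> R) (B c t : R) :
  geod_e A B (fun=> 0) (fun=> 0) (c - B) t = expZ n (t * c).
Proof.
rewrite /geod_e; case: eqP => [cB|_].
  rewrite -(subr0_eq cB).
  by apply: Hpt_ext => [i|i|] /=; rewrite ?mul0r // mulrC.
apply: Hpt_ext => [i|i|] /=; rewrite ?mul0r ?subrr ?addr0 //.
under eq_bigr do rewrite expr0n addr0 mul0r.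
under [X in _ - X]eq_bigr do rewrite expr0n addr0 !mul0r.
by rewrite !big1_eq subr0 addr0 subrK mulrC.
Qed.

Lemma vertical_line_geod_energy (A : 'I_n -> R) (B c : R) :
  IsMagGeodEnergy A B (fun t => expZ n (t * c)) `|c|.
Proof.
split=> //; exists (fun=> 0), (fun=> 0), (c - B); split.
  by move=> t; rewrite mul0r Hmul_expZl geod_e_vertical add0r.
rewrite /geod_energy_sq big1 ?add0r ?subrK ?real_normK ?num_real //.
by move=> i _; rewrite expr0n addr0 mul0r.
Qed.

Lemma vertical_line_periodic (zg c : R) :
  zg != 0 -> c != 0 ->
  gamma_periodic (expZ n zg) (fun t => expZ n (t * c)) (zg / c).
Proof.
move=> zg_neq0 c_neq0; split; first exact: expZ_neq_He.
split; first by rewrite mulf_neq0 ?invr_eq0.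
by move=> t; rewrite Hmul_expZl /= mulrDl divfK // addrC.
Qed.

End VerticalLines.

Theorem lemma4p4 (R : realType) (n : nat) (hn : (0 < n)%N)
  (A : 'I_n -> R) (hA : forall i, 0 < A i) (B : R)
  (zg : R) (hzg : zg != 0) :
  (forall sigma : R -> Hpt R n,
      IsMagGeod A B sigma ->
      (exists omega, gamma_periodic (expZ n zg) sigma omega) ->
      IsOneParamSubgroup sigma ->
      exists z0 : R, z0 != 0 /\ forall t, sigma t = expZ n (t * z0))
  /\
  (forall E : R, 0 < E ->
      (IsMagGeodEnergy A B (fun t => expZ n (t * E)) E /\
       gamma_periodic (expZ n zg) (fun t => expZ n (t * E)) (zg / E))
   /\ (IsMagGeodEnergy A B (fun t => expZ n (t * - E)) E /\
       gamma_periodic (expZ n zg) (fun t => expZ n (t * - E)) (zg / - E))).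
Proof.
split.
  (* Periodicity alone pins down [W]. *)
  move=> sigma _ [om [_ [om_neq0 periodic]]] [W /funext sigmaE].
  subst sigma; have := periodic 0; rewrite /= add0r Hexp_scale0 Hmul1 => /esym.
  case/(Hexp_scale_eq_expZ om_neq0) => Wz_eq vertical.
  by exists (hz W); split; rewrite // Wz_eq mulf_neq0 ?invr_eq0.
move=> E E_gt0; have E_neq0 := lt0r_neq0 E_gt0.
split; split.
- by have := vertical_line_geod_energy A B E; rewrite gtr0_norm.
- exact: vertical_line_periodic.
- by have := vertical_line_geod_energy A B (- E); rewrite normrN gtr0_norm.
- by apply: vertical_line_periodic; rewrite ?oppr_eq0.
Qed.
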